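(* Let $L\ge 1$ and let $G=\mathbb{Z}_L^2=(V,E)$ be the $L\times L$ square lattice with periodic boundary conditions (the discrete torus), with $m=|E|=2L^2$ edges. Let $A\subseteq E$ be a random bond configuration of bond percolation with parameter $p=1/2$, i.e. each edge is included in $A$ independently with probability $1/2$. For the loop configuration associated with $A$ (defined in the context), let $N_1(A)$ be the number of edges $e\in A$ whose two associated loop segments belong to the same loop, and $N_2(A)$ the number of edges $e\in A$ whose two associated loop segments belong to distinct loops. Set $\mathcal{L}_1=N_1(A)/m$ and $\mathcal{L}_2=N_2(A)/m$. Then for every $L$, $$\mathbb{E}\,\mathcal{L}_1=\mathbb{E}\,\mathcal{L}_2=\tfrac14 .$$
   Context: Loop (Baxter–Kelland–Wu) configuration: the medial graph of $G$ (embedded on the torus) has one vertex $v_e$ at the midpoint of each edge $e\in E$, and a medial edge joining $v_e$ and $v_{e'}$ whenever $e,e'$ are consecutive edges on the boundary of a common face $f$ and share an endpoint $x$. Thus the four medial edges at $v_e$ are indexed by pairs $(x,f)$ with $x$ an endpoint of $e$ and $f$ one of the two faces adjacent to $e$. Given $A\subseteq E$, at each $v_e$ the four incident medial edges are paired into two non-crossing arcs: if $e\in A$ (occupied), $(x,f)$ is paired with $(y,f)$ for each adjacent face $f$ (where $x,y$ are the endpoints of $e$), so the arcs run alongside $e$ on either side without crossing it; if $e\notin A$, $(x,f)$ is paired with $(x,f')$ for each endpoint $x$ (where $f,f'$ are the two faces adjacent to $e$), so the arcs cross $e$. Following these pairings decomposes the medial edges into disjoint closed curves, the loops. For an occupied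 edge $e\in A$, its two associated loop segments are the two arcs at $v_e$ running alongside $e$ (one on each side). *)

From mathcomp Require Import all_boot all_order all_algebra.
Set Implicit Arguments. Unset Strict Implicit. Unset Printing Implicit Defensive.
Import GRing.Theory Num.Theory.
Local Open Scope ring_scope.

(* Edges: (i, j, d); d = false is the horizontal edge (i,j)--(i+1,j),
   d = true is the vertical edge (i,j)--(i,j+1). *)
Definition edge (L : nat) : finType := ('I_L * 'I_L * bool)%type.

Definition hedge (L : nat) (i j : 'I_L) : edge L := (i, j, false).
Definition vedge (L : nat) (i j : 'I_L) : edge L := (i, j, true).

(* Half-edges of the medial graph at v_e: (e, s, t), where s selects the
   endpoint of e (false = start, true = end) and t selects the adjacent face
   (for horizontal edges false = below, true = above; for vertical edges
   false = left, true = right).  They index the four medial edges at v_e. *)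
Definition half (L : nat) : finType := (edge L * bool * bool)%type.

(* tau: the medial edge at corner (x, f) joins the half-edge of e to the
   half-edge of the edge e' consecutive to e on the boundary of face f
   sharing endpoint x.  Face (i,j) is the square with lower-left corner (i,j). *)
Definition tau (L : nat) (h : half L) : half L :=
  let: (e, s, t) := h in
  let: (i, j, d) := e in
  if ~~ d then
    match s, t with
    | false, true  => (vedge i j, false, true)
    | true , true  => (vedge (ordS i) j, false, false)
    | true , false => (vedge (ordS i) (ord_pred j), true, false)
    | false, false => (vedge i (ord_pred j), true, true)
    end
  else
    match s, t with
    | false, true  => (hedge i j, false, true)
    | true , true  => (hedge i (ordS j), false, false)
    | false, false => (hedge (ord_pred i) j, true, true)
    | true , false => (hedge (ord_pred i) (ordS j), true, false)
    end.

(* sigma_A: the pairing at v_e.  Occupied edge: arcs run alongside e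
   (same face, other endpoint).  Vacant edge: arcs cross e
   (same endpoint, other face). *)
Definition sigma (L : nat) (A : {set edge L}) (h : half L) : half L :=
  let: (e, s, t) := h in
  if e \in A then (e, ~~ s, t) else (e, s, ~~ t).

Definition loop_rel (L : nat) (A : {set edge L}) : rel (half L) :=
  fun x y => (y == sigma A x) || (y == tau x).

Definition same_loop (L : nat) (A : {set edge L}) (x y : half L) : bool :=
  connect (loop_rel A) x y.

(* For e in A, its two loop segments are the arcs (e,false,t)--(e,true,t),
   t = false, true; the loop containing the segment on side t is the loop
   containing the half-edge (e,false,t). *)
Definition N1 (L : nat) (A : {set edge L}) : nat :=
  #|[set e in A | same_loop A (e, false, false) (e, false, true)]|.

Definition N2 (L : nat) (A : {set edge L}) : nat :=
  #|[set e in A | ~~ same_loop A (e, false, false) (e, false, true)]|.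

Definition nedges (L : nat) : nat := #|{: edge L}|.

Definition calL1 (L : nat) (A : {set edge L}) : rat := (N1 A)%:R / (nedges L)%:R.
Definition calL2 (L : nat) (A : {set edge L}) : rat := (N2 A)%:R / (nedges L)%:R.

Definition perc_weight (L : nat) (p : rat) (A : {set edge L}) : rat :=
  p ^+ #|A| * (1 - p) ^+ (nedges L - #|A|).

Definition perc_expect (L : nat) (p : rat) (X : {set edge L} -> rat) : rat :=
  \sum_(A : {set edge L}) perc_weight p A * X A.

From Pilot Require Import Defs.
From mathcomp Require Import all_boot all_order all_algebra ring.
Set Implicit Arguments. Unset Strict Implicit. Unset Printing Implicit Defensive.

(* The loops are the cycles of the involution pair (sigma_A, tau); following
   tau \o sigma_A from a half-edge runs along its loop, and every loop is the
   union of two such orbits, one of each parity.  Opening a vacant edge e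
   changes loop_next on the parity class of (e,false,false) by a transposition,
   which merges two cycles or splits one: so adding e to A turns "the two
   segments of e are on one loop" into "the two crossing arcs of e are on
   different loops", and conversely.  Summing over A, the events
   {e open, joined} and {e closed, split} are equinumerous, as are
   {e open, split} and {e closed, joined}.  Planar duality (rotating the dual
   torus onto the torus and complementing A) preserves loops and exchanges open
   and closed edges, so {e open, joined} and {e closed, joined} are
   equinumerous too.  Hence the four events each have total count 2^m m / 4. *)

Lemma iter_eq_along (T : Type) (f g : T -> T) x n :
  (forall i, i < n -> g (iter i f x) = f (iter i f x)) -> iter n g x = iter n f x.
Proof.
elim: n => [|n IHn] //= eq_gf.
rewrite IHn ?eq_gf // => i lt_in.
by rewrite eq_gf // ltnW.
Qed.

Lemma fconnect_conj (T : finType) (f g h : T -> T) : injective h ->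
  (forall x, g (h x) = h (f x)) -> forall x y, fconnect g (h x) (h y) = fconnect f x y.
Proof.
move=> h_inj gh_hf x y.
have iter_conj n : iter n g (h x) = h (iter n f x) by elim: n => //= n ->.
apply/idP/idP => [/iter_findex | /iter_findex <-]; last by rewrite -iter_conj fconnect_iter.
by rewrite iter_conj => /h_inj <-; apply: fconnect_iter.
Qed.

Lemma card_set_sum (T : finType) (P : pred T) : #|[set x | P x]| = \sum_x P x.
Proof. by rewrite -sum1dep_card big_mkcond; apply: eq_bigr => x _; case: (P x). Qed.

Section SwapCycles.
Variables (T : finType) (f g : T -> T) (P : pred T) (a d : T).
Hypotheses (f_inj : injective f) (g_inj : injective g).
Hypotheses (a_neq_d : a != d) (Pa : P a) (Pd : P d).
Hypothesis fP : forall x, P x -> P (f x).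
Hypotheses (g_a : g a = f d) (g_d : g d = f a).
Hypothesis g_other : forall x, P x -> x != a -> x != d -> g x = f x.

Lemma iter_swap_avoiding x y n : g x = f y -> P y ->
    (forall j, 0 < j <= n -> (iter j f y != a) && (iter j f y != d)) ->
  iter n.+1 g x = iter n.+1 f y.
Proof.
move=> gx Py avoid; rewrite !iterSr gx; apply: iter_eq_along => i lt_in.
have Pi : P (iter i.+1 f y) by elim: i.+1 => //= j IHj; apply: fP.
by case/andP: (avoid i.+1 lt_in) => ??; rewrite -iterSr g_other.
Qed.

Lemma swap_splits_cycle : fconnect f a d -> ~~ fconnect g a d.
Proof.
move=> fad; set k := findex f a d.
have lt_k_ord : k < order f a by apply: findex_max.
have k_gt0 : 0 < k by rewrite lt0n findex_eq0.
have iter_neq_a i : 0 < i < order f a -> iter i f a != a.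
  case/andP=> i_gt0 /findex_iter; apply: contraPneq => ->.
  by rewrite findex0 => i0; rewrite -i0 in i_gt0.
have gd_fa i : i < k -> iter i.+1 g d = iter i.+1 f a.
  move=> lt_ik; apply: iter_swap_avoiding => // j /andP[j_gt0 le_ji].
  have lt_jk : j < k by apply: leq_ltn_trans lt_ik.
  rewrite iter_neq_a ?j_gt0 ?(ltn_trans lt_jk) //=.
  apply: contraPneq (findex_iter (ltn_trans lt_jk lt_k_ord)) => ->.
  by rewrite -/k => k_j; rewrite k_j ltnn in lt_jk.
have d_loops : looping g d k.
  rewrite /looping.
  have -> : iter k g d = d.
    by rewrite -(prednK k_gt0) gd_fa ?prednK ?iter_findex // ltn_predL.
  by rewrite -(prednK k_gt0) mem_head.
rewrite fconnect_sym //; apply/negP => /iter_findex a_def.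
have /trajectP[[|i] lt_ik] := loopingP d_loops (findex g d a); rewrite a_def => a_iter.
  by move: a_neq_d; rewrite a_iter eqxx.
have : iter i.+1 f a = a by rewrite -gd_fa ?(ltnW lt_ik) // -a_iter.
by apply/eqP; rewrite iter_neq_a // (ltn_trans lt_ik lt_k_ord).
Qed.

Lemma swap_joins_cycles : ~~ fconnect f a d -> fconnect g a d.
Proof.
move=> not_fad; set m := order f d.
have m_gt0 : 0 < m by apply: order_gt0.
suff <- : iter m g a = d by apply: fconnect_iter.
rewrite -(prednK m_gt0) (iter_swap_avoiding (y := d)) ?prednK ?iter_order // => j.
case/andP=> j_gt0 le_jm; apply/andP; split.
  apply: contraNneq not_fad => <-.
  by rewrite fconnect_sym // fconnect_iter.
have lt_jm : j < m by rewrite -(prednK m_gt0) ltnS.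
apply: contraPneq (findex_iter lt_jm) => ->.
by rewrite findex0 => j0; rewrite -j0 in j_gt0.
Qed.

Lemma fconnect_swap : fconnect g a d = ~~ fconnect f a d.
Proof.
by case: (boolP (fconnect f a d)) => [/swap_splits_cycle/negbTE | /swap_joins_cycles].
Qed.

End SwapCycles.

Section TorusLoops.
Variable L : nat.
Implicit Types (A : {set edge L}) (e : edge L) (h : Defs.half L).

Lemma tauK : involutive (@tau L).
Proof.
case=> [[[[i j] d] s] t].
by case: d; case: s; case: t; rewrite /tau /hedge /vedge /= ?ordSK ?ord_predK.
Qed.

Lemma sigmaK A : involutive (sigma A).
Proof. by case=> [[e s] t]; rewrite /sigma; case: ifP => eA; rewrite eA negbK. Qed.

Definition parity h : bool := let: (i, j, d, s, t) := h in s (+) t (+) d.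

Lemma parity_sigma A h : parity (sigma A h) = ~~ parity h.
Proof.
by case: h => [[[[i j] d] s] t]; rewrite /sigma; case: (_ \in A); case: d s t => [] [] [].
Qed.

Lemma parity_tau h : parity (tau h) = ~~ parity h.
Proof. by case: h => [[[[i j] d] s] t]; case: d s t => [] [] []. Qed.

Definition loop_next A h := tau (sigma A h).

Lemma loop_next_inj A : injective (loop_next A).
Proof. exact: inj_comp (inv_inj tauK) (inv_inj (sigmaK A)). Qed.

Lemma parity_loop_next A h : parity (loop_next A h) = parity h.
Proof. by rewrite parity_tau parity_sigma negbK. Qed.

Lemma fconnect_loop_next_parity A x y :
  fconnect (loop_next A) x y -> parity x = parity y.
Proof. by apply: fconnect_invariant => z; rewrite /invariant /= parity_loop_next eqxx. Qed.

Lemma same_loopE A x y :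
  same_loop A x y = fconnect (loop_next A) x y || fconnect (loop_next A) x (sigma A y).
Proof.
set R := fun w => fconnect (loop_next A) x w || fconnect (loop_next A) x (sigma A w).
have R_step u v : loop_rel A u v -> R u -> R v.
  rewrite /R => /orP[] /eqP-> /orP[xu | xu]; apply/orP.
  - by right; rewrite sigmaK.
  - by left.
  - right; apply: connect_trans xu _; rewrite fconnect_sym; last exact: loop_next_inj.
    by apply/connect1/eqP; rewrite /loop_next sigmaK tauK.
  - by left; apply: connect_trans xu _; apply/connect1/eqP; rewrite /loop_next sigmaK.
have next_loop : subrel (frel (loop_next A)) (connect (loop_rel A)).
  move=> u _ /eqP <-; apply: (@connect_trans _ _ (sigma A u)).
    by apply: connect1; rewrite /loop_rel eqxx.
  by apply: connect1; rewrite /loop_rel eqxx orbT.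
have R_path w p : R w -> path (loop_rel A) w p -> R (last w p).
  by elim: p w => [|z p IHp] w //= Rw /andP[/R_step/(_ Rw) /IHp].
apply/idP/idP => [/connectP[p pth ->] | /orP[] /(connect_sub next_loop) // xy].
  by apply: R_path pth; rewrite /R connect0.
by apply: connect_trans xy (connect1 _); rewrite /loop_rel sigmaK eqxx.
Qed.

(* If e is in A, (e,false,false) and (e,false,true) lie on its two segments;
   if e is not in A, (e,false,false) and (e,true,false) lie on its two
   crossing arcs. *)
Definition loop_across A e := same_loop A (e, false, false) (e, false, true).
Definition loop_along A e := same_loop A (e, false, false) (e, true, false).

Lemma loop_across_setU1 A e :
  e \notin A -> loop_across (e |: A) e = ~~ loop_along A e.
Proof.
move=> eA; have eA' : e \in e |: A by rewrite setU11.
rewrite /loop_across /loop_along !same_loopE.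
have -> : sigma (e |: A) (e, false, true) = (e, true, true) by rewrite /sigma eA'.
have -> : sigma A (e, true, false) = (e, true, true) by rewrite /sigma (negbTE eA).
have flip_parity s : parity (e, s, ~~ s) != parity (e, false, false).
  by case: e {eA eA'} => [[i j] []]; case: s.
have unreachable B s : ~~ fconnect (loop_next B) (e, false, false) (e, s, ~~ s).
  by apply: contra (flip_parity s) => /fconnect_loop_next_parity ->.
rewrite orb_idl; last by move/(negP (unreachable (e |: A) false)).
rewrite orb_idl; last by move/(negP (unreachable A true)).
apply: (fconnect_swap (P := fun x => parity x == parity (e, false, false))).
- exact: loop_next_inj.
- exact: loop_next_inj.
- by rewrite !xpair_eqE andbF.
- by [].
- by case: e {eA eA' flip_parity unreachable} => [[i j] []].
- by move=> x; rewrite parity_loop_next.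
- by rewrite /loop_next /sigma eA' (negbTE eA).
- by rewrite /loop_next /sigma eA' (negbTE eA).
case=> [[e' s] t]; case: (eqVneq e' e) => [-> | ne_e'e] same_parity.
  case: e {eA eA' flip_parity unreachable} same_parity => [[i j] []];
  by case: s; case: t; rewrite ?eqxx.
by rewrite /loop_next /sigma in_setU1 (negbTE ne_e'e).
Qed.

(* The edge of the dual torus crossing e, rotated by a quarter turn onto the
   torus itself; it maps the endpoints of e to the faces of its image. *)
Definition dual_edge e : edge L :=
  let: (i, j, d) := e in if d then (ordS j, i, true) else (j, ordS i, false).

Definition dual_edge_inv e : edge L :=
  let: (i, j, d) := e in if d then (j, ord_pred i, true) else (ord_pred j, i, false).

Lemma dual_edgeK : cancel dual_edge dual_edge_inv.
Proof. by case=> [[i j] []] /=; rewrite ordSK. Qed.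

Lemma dual_edge_inj : injective dual_edge.
Proof. exact: can_inj dual_edgeK. Qed.

Definition dual_half h : Defs.half L := let: (e, s, t) := h in (dual_edge e, t, s).

Lemma dual_half_inj : injective dual_half.
Proof. by case=> [[e s] t] [[e' s'] t'] [/dual_edge_inj -> -> ->]. Qed.

Definition dual_config A : {set edge L} := [set e | dual_edge_inv e \notin A].

Lemma mem_dual_config A e : (dual_edge e \in dual_config A) = (e \notin A).
Proof. by rewrite inE dual_edgeK. Qed.

Lemma dual_config_inj : injective dual_config.
Proof.
by move=> A B eqAB; apply/setP => e; apply: negb_inj; rewrite -!mem_dual_config eqAB.
Qed.

Lemma tau_dual_half h : tau (dual_half h) = dual_half (tau h).
Proof.
case: h => [[[[i j] d] s] t].
by case: d s t => [] [] []; rewrite /= ?ordSK ?ord_predK.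
Qed.

Lemma sigma_dual_half A h : sigma (dual_config A) (dual_half h) = dual_half (sigma A h).
Proof. by case: h => [[e s] t]; rewrite /= mem_dual_config; case: (e \in A). Qed.

Lemma loop_next_dual_half A h :
  loop_next (dual_config A) (dual_half h) = dual_half (loop_next A h).
Proof. by rewrite /loop_next sigma_dual_half tau_dual_half. Qed.

Lemma same_loop_dual A x y :
  same_loop (dual_config A) (dual_half x) (dual_half y) = same_loop A x y.
Proof.
rewrite !same_loopE sigma_dual_half.
have dual_fconnect := fconnect_conj dual_half_inj (loop_next_dual_half A).
exact: (f_equal2 orb (dual_fconnect x y) (dual_fconnect x (sigma A y))).
Qed.

Definition open_joined A e := (e \in A) && loop_across A e.
Definition open_split A e := (e \in A) && ~~ loop_across A e.
Definition closed_joined A e := (e \notin A) && loop_along A e.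
Definition closed_split A e := (e \notin A) && ~~ loop_along A e.

Definition toggle e A := if e \in A then A :\ e else e |: A.

Lemma toggleK e : involutive (toggle e).
Proof.
move=> A; rewrite /toggle; have [eA | eA] := boolP (e \in A).
  by rewrite setD11 setD1K.
by rewrite setU11 setU1K.
Qed.

Lemma sum_open_joined_toggle e :
  \sum_A open_joined A e = \sum_A closed_split A e.
Proof.
rewrite (reindex_inj (inv_inj (toggleK e))); apply: eq_bigr => A _.
rewrite /open_joined /closed_split /toggle; case: ifPn => eA.
  by rewrite setD11.
by rewrite setU11 loop_across_setU1.
Qed.

Lemma sum_open_split_toggle e :
  \sum_A open_split A e = \sum_A closed_joined A e.
Proof.
rewrite (reindex_inj (inv_inj (toggleK e))); apply: eq_bigr => A _.
rewrite /open_split /closed_joined /toggle; case: ifPn => eA.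
  by rewrite setD11.
by rewrite setU11 loop_across_setU1 ?negbK.
Qed.

Lemma sum_open_joined_dual :
  \sum_A \sum_e open_joined A e = \sum_A \sum_e closed_joined A e.
Proof.
rewrite [RHS](reindex_inj dual_config_inj); apply: eq_bigr => A _.
rewrite [RHS](reindex_inj dual_edge_inj); apply: eq_bigr => e _.
rewrite /closed_joined mem_dual_config negbK /loop_along.
have -> : (dual_edge e, false, false) = dual_half (e, false, false) by [].
have -> : (dual_edge e, true, false) = dual_half (e, false, true) by [].
by rewrite same_loop_dual.
Qed.

Lemma sum_loop_indicators :
  \sum_A \sum_e (open_joined A e + open_split A e + closed_joined A e + closed_split A e)
    = 2 ^ nedges L * nedges L.
Proof.
rewrite (eq_bigr (fun A => \sum_(e : edge L) 1)) => [|A _]; last first.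
  apply: eq_bigr => e _; rewrite /open_joined /open_split /closed_joined /closed_split.
  by case: (e \in A); case: (loop_across A e); case: (loop_along A e).
rewrite sum1_card sum_nat_const.
by rewrite -cardsT -powersetT card_powerset cardsT.
Qed.

Lemma sum_open_split :
  \sum_A \sum_e open_split A e = \sum_A \sum_e open_joined A e.
Proof.
rewrite sum_open_joined_dual exchange_big [RHS]exchange_big.
by apply: eq_bigr => e _; apply: sum_open_split_toggle.
Qed.

Lemma sum_open_joined : (4 * \sum_A \sum_e open_joined A e = 2 ^ nedges L * nedges L)%N.
Proof.
have big_split4 A : \sum_e (open_joined A e + open_split A e + closed_joined A e
    + closed_split A e) = \sum_e open_joined A e + \sum_e open_split A e
    + \sum_e closed_joined A e + \sum_e closed_split A e.
  by rewrite !big_split.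
have closed_split_sum : \sum_A \sum_e closed_split A e = \sum_A \sum_e open_joined A e.
  rewrite exchange_big [RHS]exchange_big.
  by apply: eq_bigr => e _; rewrite sum_open_joined_toggle.
rewrite -sum_loop_indicators (eq_bigr _ (fun A _ => big_split4 A)) !big_split /=.
rewrite sum_open_split -sum_open_joined_dual closed_split_sum.
by rewrite !mulSn mul0n addn0 !addnA.
Qed.

Lemma N1E A : N1 A = \sum_e open_joined A e.
Proof. exact: card_set_sum. Qed.

Lemma N2E A : N2 A = \sum_e open_split A e.
Proof. exact: card_set_sum. Qed.

End TorusLoops.

Import GRing.Theory Num.Theory.
Local Open Scope ring_scope.

Lemma nedges_gt0 L : (0 < L)%N -> (0 < nedges L)%N.
Proof. by move=> L_gt0; rewrite /nedges !card_prod !card_ord card_bool !muln_gt0 L_gt0. Qed.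

Lemma perc_expect_half L (X : {set edge L} -> rat) :
  perc_expect (1 / 2) X = (\sum_A X A) / 2 ^+ nedges L.
Proof.
have half_weight (A : {set edge L}) : perc_weight (1 / 2) A = (2 ^+ nedges L)^-1.
  rewrite /perc_weight (_ : 1 - 1 / 2 = 1 / 2); last by field.
  by rewrite -exprD subnKC ?max_card // div1r exprVn.
rewrite /perc_expect mulr_suml; apply: eq_bigr => A _.
by rewrite half_weight mulrC.
Qed.

Lemma perc_expect_half_count L (N : {set edge L} -> nat) : (0 < nedges L)%N ->
    (4 * \sum_A N A = 2 ^ nedges L * nedges L)%N ->
  perc_expect (1 / 2) (fun A => (N A)%:R / (nedges L)%:R) = 1 / 4.
Proof.
move=> m_gt0 sumN; rewrite perc_expect_half -mulr_suml -natr_sum.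
have /(congr1 (GRing.natmul (1 : rat))) := sumN.
rewrite natrM natrM natrX => {}sumN.
have m_neq0 : (nedges L)%:R != 0 :> rat by rewrite pnatr_eq0 -lt0n.
have -> : (\sum_A N A)%:R = (2 ^+ nedges L * (nedges L)%:R) / 4 :> rat.
  by rewrite -sumN; field.
by field; rewrite m_neq0 expf_neq0.
Qed.

Theorem lemma1 (L : nat) (hL : (1 <= L)%N) :
  perc_expect (1 / 2) (@calL1 L) = 1 / 4 /\
  perc_expect (1 / 2) (@calL2 L) = 1 / 4.
Proof.
split; apply: perc_expect_half_count; rewrite ?nedges_gt0 //.
  by under eq_bigr do rewrite N1E; apply: sum_open_joined.
by under eq_bigr do rewrite N2E; rewrite sum_open_split; apply: sum_open_joined.
Qed.
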